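(* (i) Let $p\ge 1/4$. Then for all $r\in(0,1)$, $$\frac\pi2(1-r)^p<K(r)<\frac{\pi}{2(1-r)^p}.$$ (ii) Let $p\in(0,1/4)$ and let $x_p$ be the unique zero in $(0,1)$ of $E(x)+((1-2p)x-1)K(x)$. Then for all $r\in(0,x_p)$, $$\frac{\pi}{2(1-r)^p}<K(r)<\frac{(1-x_p)^pK(x_p)}{(1-r)^p}.$$
   Context: $K(x)={\cal K}(\sqrt x)$ and $E(x)={\cal E}(\sqrt x)$ for $x\in[0,1)$, where ${\cal K}(r)=\int_0^{\pi/2}(1-r^2\sin^2t)^{-1/2}dt$ and ${\cal E}(r)=\int_0^{\pi/2}(1-r^2\sin^2t)^{1/2}dt$ are the complete elliptic integrals of the first and second kind. *)

From Stdlib Require Import Reals.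
From Coquelicot Require Import Coquelicot.
Open Scope R_scope.

Definition calK (r : R) : R :=
  RInt (fun t => / sqrt (1 - r ^ 2 * (sin t) ^ 2)) 0 (PI / 2).
Definition calE (r : R) : R :=
  RInt (fun t => sqrt (1 - r ^ 2 * (sin t) ^ 2)) 0 (PI / 2).

Definition K (x : R) : R := calK (sqrt x).
Definition E (x : R) : R := calE (sqrt x).

Definition zfun (p x : R) : R := E x + ((1 - 2 * p) * x - 1) * K x.

From Stdlib Require Import Reals Lra.
From Coquelicot Require Import Coquelicot.
Open Scope R_scope.

(** Write [K(x) = ∫ w x] and [A(x) = ∫ cos² · w x] over [0, π/2], where
    [w x t = (1 - x sin² t)^(-1/2)].  Differentiating under the integral and
    integrating [t ↦ sin t cos t · w x t] by parts gives [K' = A / (2(1-x))], so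
    [g_p(x) = (1-x)^p K(x)] has [g_p' = (1-x)^(p-1)/2 · K · (A/K - 2p)].
    Chebyshev's integral inequality, applied to the decreasing [cos²] and the
    increasing [w y / w x] with weight [w x], shows that [A/K] decreases strictly
    from [1/2] at [0]; it tends to [0] because [A <= 1] while [K] is unbounded.
    For [p >= 1/4], [g_(1/4)] therefore decreases from [π/2].  For [p < 1/4],
    [zfun p x = x K(x) (A/K - 2p)] vanishes exactly where [A/K] crosses [2p],
    which happens at a single point [x_p], and [g_p] increases on [[0, x_p]]. *)

Definition delta (x t : R) : R := 1 - x * sin t ^ 2.
Definition w (x t : R) : R := / sqrt (delta x t).
Definition dw (x t : R) : R := sin t ^ 2 / (2 * (delta x t * sqrt (delta x t))).

Local Ltac fold_delta :=
  repeat match goal with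
  | |- context [1 + - (?x * (sin ?t * (sin ?t * 1)))] =>
      replace (1 + - (x * (sin t * (sin t * 1)))) with (delta x t) by (unfold delta; ring)
  end.

(* [RInt] lives in a normed module whose carrier is only convertible to [R]. *)
Local Ltac real_eq := match goal with |- ?l = ?r => change (l = r :> R) end.

Lemma continuous_of_ex_derive (f : R -> R) x : ex_derive f x -> continuous f x.
Proof. exact (ex_derive_continuous (K := R_AbsRing) (V := R_NormedModule) f x). Qed.

Lemma ex_RInt_of_continuous (f : R -> R) a b : (forall t, continuous f t) -> ex_RInt f a b.
Proof. intros; now apply (ex_RInt_continuous (V := R_CompleteNormedModule)). Qed.

Lemma RInt_const_R c a b : RInt (fun _ => c) a b = c * (b - a).
Proof. rewrite RInt_const; apply Rmult_comm. Qed.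

Lemma RInt_zero a b : RInt (fun _ => 0) a b = 0.
Proof. rewrite RInt_const_R; apply Rmult_0_l. Qed.

Lemma RInt_lin (f g : R -> R) a b c1 c2 : ex_RInt f a b -> ex_RInt g a b ->
  RInt (fun t => c1 * f t + c2 * g t) a b = c1 * RInt f a b + c2 * RInt g a b.
Proof.
  intros Hf Hg; apply is_RInt_unique.
  apply (is_RInt_plus (V := R_NormedModule) (fun t => scal c1 (f t)) (fun t => scal c2 (g t)));
    apply (is_RInt_scal (V := R_NormedModule)); now apply (RInt_correct (V := R_CompleteNormedModule)).
Qed.

Lemma RInt_lin4 (f1 f2 f3 f4 : R -> R) a b c1 c2 c3 c4 :
  ex_RInt f1 a b -> ex_RInt f2 a b -> ex_RInt f3 a b -> ex_RInt f4 a b ->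
  RInt (fun t => c1 * f1 t + c2 * f2 t + c3 * f3 t + c4 * f4 t) a b =
  c1 * RInt f1 a b + c2 * RInt f2 a b + c3 * RInt f3 a b + c4 * RInt f4 a b.
Proof.
  intros H1 H2 H3 H4; apply is_RInt_unique.
  apply (is_RInt_ext (fun t => plus (plus (plus (scal c1 (f1 t)) (scal c2 (f2 t)))
                                         (scal c3 (f3 t))) (scal c4 (f4 t)))); [easy |].
  apply (is_RInt_plus (V := R_NormedModule));
    [apply (is_RInt_plus (V := R_NormedModule)); [apply (is_RInt_plus (V := R_NormedModule)) |] |];
    apply (is_RInt_scal (V := R_NormedModule)); now apply (RInt_correct (V := R_CompleteNormedModule)).
Qed.

Lemma RInt_pos (m : R -> R) a b : a < b -> (forall t, continuous m t) ->
  (forall t, a <= t <= b -> 0 < m t) -> 0 < RInt m a b.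
Proof.
  intros Hab Hm Hpos; rewrite <- (RInt_zero a b).
  apply RInt_lt; [exact Hab | intros; apply Hm | intros; apply continuous_const |].
  intros; apply Hpos; lra.
Qed.

Lemma RInt_neg_off_point (g : R -> R) a b t0 : a < b -> a <= t0 <= b ->
  (forall t, continuous g t) -> (forall t, a <= t <= b -> t <> t0 -> g t < 0) ->
  RInt g a b < 0.
Proof.
  intros Hab Ht0 Hg Hneg.
  assert (Hpiece : forall c d, a <= c -> c < d -> d <= b -> t0 <= c \/ d <= t0 -> RInt g c d < 0).
  { intros c d Hc Hcd Hd Hout; rewrite <- (RInt_zero c d).
    apply RInt_lt; [exact Hcd | intros; apply continuous_const | intros; apply Hg |].
    intros t Ht; apply Hneg; lra. }
  destruct (Req_dec t0 a) as [-> | Hta]; [apply Hpiece; lra |].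
  destruct (Req_dec t0 b) as [-> | Htb]; [apply Hpiece; lra |].
  rewrite <- (RInt_Chasles g a t0 b) by (apply ex_RInt_of_continuous, Hg).
  pose proof (Hpiece a t0); pose proof (Hpiece t0 b).
  change (plus (RInt g a t0) (RInt g t0 b)) with (RInt g a t0 + RInt g t0 b); lra.
Qed.

Lemma RInt_weighted_mean_value (phi m : R -> R) a b : a < b ->
  (forall t, continuous phi t) -> (forall t, continuous m t) ->
  (forall t, a <= t <= b -> 0 < m t) ->
  (forall s t, a <= s -> s <= t -> t <= b -> phi s <= phi t) ->
  exists t0, a <= t0 <= b /\ phi t0 * RInt m a b = RInt (fun t => phi t * m t) a b.
Proof.
  intros Hab Hphi Hm Hmpos Hmono.
  pose proof (RInt_pos m a b Hab Hm Hmpos) as HM.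
  set (M := RInt m a b) in *; set (P := RInt (fun t => phi t * m t) a b).
  assert (HPM : P / M * M = P) by (field; lra).
  assert (Hex : ex_RInt (fun t => phi t * m t) a b)
    by (apply ex_RInt_of_continuous; intros; now apply (continuous_mult phi m)).
  assert (Hexc : forall c, ex_RInt (fun t => c * m t) a b)
    by (intros c; exact (ex_RInt_scal (V := R_CompleteNormedModule) m a b c
                           (ex_RInt_of_continuous m a b Hm))).
  assert (HcM : forall c, c * M = RInt (fun t => c * m t) a b)
    by (intros c; symmetry; exact (RInt_scal (V := R_CompleteNormedModule) m a b c
                                     (ex_RInt_of_continuous m a b Hm))).
  assert (Hlow : phi a * M <= P).
  { rewrite HcM; apply RInt_le; [lra | apply Hexc | exact Hex |].
    intros t Ht; pose proof (Hmpos t ltac:(lra)); pose proof (Hmono a t ltac:(lra) ltac:(lra) ltac:(lra)); nra. }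
  assert (Hup : P <= phi b * M).
  { rewrite HcM; apply RInt_le; [lra | exact Hex | apply Hexc |].
    intros t Ht; pose proof (Hmpos t ltac:(lra)); pose proof (Hmono t b ltac:(lra) ltac:(lra) ltac:(lra)); nra. }
  destruct (IVT_gen phi a b (P / M)) as [t0 [Ht0 Hk]].
  - intros t; apply continuity_pt_filterlim, Hphi.
  - pose proof (Hmono a b ltac:(lra) ltac:(lra) ltac:(lra)).
    rewrite Rmin_left, Rmax_right by lra; split; apply (Rmult_le_reg_r M); lra.
  - rewrite Rmin_left, Rmax_right in Ht0 by lra.
    exists t0; split; [exact Ht0 |]; now rewrite Hk.
Qed.

Lemma RInt_chebyshev_strict (f phi m : R -> R) a b : a < b ->
  (forall t, continuous f t) -> (forall t, continuous phi t) -> (forall t, continuous m t) ->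
  (forall t, a <= t <= b -> 0 < m t) ->
  (forall s t, a <= s -> s < t -> t <= b -> f t < f s) ->
  (forall s t, a <= s -> s < t -> t <= b -> phi s < phi t) ->
  RInt (fun t => f t * phi t * m t) a b * RInt m a b <
  RInt (fun t => f t * m t) a b * RInt (fun t => phi t * m t) a b.
Proof.
  intros Hab Hf Hphi Hm Hmpos Hfdec Hphiinc.
  assert (Hcm : forall u : R -> R, (forall t, continuous u t) -> forall t, continuous (fun t => u t * m t) t)
    by (intros u Hu t; now apply (continuous_mult u m)).
  assert (Hex : forall u : R -> R, (forall t, continuous u t) -> ex_RInt (fun t => u t * m t) a b)
    by (intros; now apply ex_RInt_of_continuous, Hcm).
  pose proof (RInt_pos m a b Hab Hm Hmpos) as HM.
  destruct (RInt_weighted_mean_value phi m a b Hab Hphi Hm Hmpos) as [t0 [Ht0 Hmean]].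
  { intros s t Hs Hst Ht; destruct (Req_dec s t) as [-> | Hne]; [lra |].
    apply Rlt_le, Hphiinc; lra. }
  (* [f - f t0] and [phi - phi t0] have opposite signs on either side of [t0]. *)
  set (g := fun t => (f t - f t0) * (phi t - phi t0) * m t).
  assert (Hg_neg : RInt g a b < 0).
  { apply (RInt_neg_off_point g a b t0 Hab Ht0).
    - intros t; unfold g; apply (Hcm (fun t => (f t - f t0) * (phi t - phi t0))).
      intros s; apply (continuous_mult (fun s => f s - f t0) (fun s => phi s - phi t0));
        [apply (continuous_minus f) | apply (continuous_minus phi)]; auto using continuous_const.
    - intros t Ht Hne; unfold g; pose proof (Hmpos t Ht).
      enough ((f t - f t0) * (phi t - phi t0) < 0) by nra.
      destruct (Rlt_or_le t t0) as [Hlt | Hle].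
      + pose proof (Hfdec t t0 (proj1 Ht) Hlt (proj2 Ht0)).
        pose proof (Hphiinc t t0 (proj1 Ht) Hlt (proj2 Ht0)); nra.
      + pose proof (Hfdec t0 t (proj1 Ht0) ltac:(lra) (proj2 Ht)).
        pose proof (Hphiinc t0 t (proj1 Ht0) ltac:(lra) (proj2 Ht)); nra. }
  assert (Hg_val : RInt g a b = RInt (fun t => f t * phi t * m t) a b
                   - phi t0 * RInt (fun t => f t * m t) a b).
  { unfold g; rewrite (RInt_ext _ (fun t => 1 * (f t * phi t * m t) + (- phi t0) * (f t * m t)
                                   + (- f t0) * (phi t * m t) + (f t0 * phi t0) * m t))
      by (intros; simpl; ring).
    rewrite RInt_lin4, <- Hmean; [real_eq; ring | | apply Hex, Hf | apply Hex, Hphi |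
                                  now apply ex_RInt_of_continuous].
    apply (Hex (fun t => f t * phi t)); intros; now apply (continuous_mult f phi). }
  rewrite <- Hmean; nra.
Qed.

Lemma sin2_bounds t : 0 <= sin t ^ 2 <= 1.
Proof. pose proof (SIN_bound t); split; nra. Qed.

Lemma sin2_strict_increasing s t : 0 <= s -> s < t -> t <= PI / 2 -> sin s ^ 2 < sin t ^ 2.
Proof.
  intros; pose proof PI_RGT_0.
  assert (sin s < sin t) by (apply sin_increasing_1; lra).
  assert (0 <= sin s) by (apply sin_ge_0; lra); nra.
Qed.

Lemma cos2_strict_decreasing s t : 0 <= s -> s < t -> t <= PI / 2 -> cos t ^ 2 < cos s ^ 2.
Proof.
  intros; pose proof PI_RGT_0.
  assert (cos t < cos s) by (apply cos_decreasing_1; lra).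
  assert (0 <= cos t) by (apply cos_ge_0; lra); nra.
Qed.

Lemma cos2_continuous t : continuous (fun t => cos t ^ 2) t.
Proof. apply continuous_of_ex_derive; auto_derive; auto. Qed.

Lemma delta_pos x t : x < 1 -> 0 < delta x t.
Proof.
  intros Hx; unfold delta; pose proof (sin2_bounds t).
  destruct (Rle_lt_dec x 0); nra.
Qed.

Lemma sqrt_delta_pos x t : x < 1 -> 0 < sqrt (delta x t).
Proof. intros; now apply sqrt_lt_R0, delta_pos. Qed.

Lemma w_pos x t : x < 1 -> 0 < w x t.
Proof. intros; now apply Rinv_0_lt_compat, sqrt_delta_pos. Qed.

Lemma w_0 t : w 0 t = 1.
Proof. unfold w, delta; rewrite Rmult_0_l, Rminus_0_r, sqrt_1; apply Rinv_1. Qed.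

Lemma w_ge_1 x t : 0 <= x < 1 -> 1 <= w x t.
Proof.
  intros Hx; pose proof (sqrt_delta_pos x t (proj2 Hx)); pose proof (sin2_bounds t).
  assert (sqrt (delta x t) <= 1)
    by (rewrite <- sqrt_1; apply sqrt_le_1_alt; unfold delta; nra).
  unfold w; rewrite <- Rinv_1; apply Rinv_le_contravar; lra.
Qed.

Lemma w_continuous x t : x < 1 -> continuous (w x) t.
Proof.
  intros Hx; pose proof (delta_pos x t Hx); pose proof (sqrt_delta_pos x t Hx).
  apply continuous_of_ex_derive; unfold w, delta; auto_derive; fold_delta.
  repeat split; lra.
Qed.

Lemma weighted_continuous (q : R -> R) x t : (forall t, continuous q t) -> x < 1 ->
  continuous (fun t => q t * w x t) t.
Proof. intros; apply (continuous_mult q (w x)); [auto | now apply w_continuous]. Qed.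

Lemma ex_RInt_weighted (q : R -> R) x a b : (forall t, continuous q t) -> x < 1 ->
  ex_RInt (fun t => q t * w x t) a b.
Proof. intros; apply ex_RInt_of_continuous; intros; now apply weighted_continuous. Qed.

Lemma ex_RInt_w x a b : x < 1 -> ex_RInt (w x) a b.
Proof. intros; apply ex_RInt_of_continuous; intros; now apply w_continuous. Qed.

Lemma is_derive_w x t : x < 1 -> is_derive (fun y => w y t) x (dw x t).
Proof.
  intros Hx; pose proof (delta_pos x t Hx); pose proof (sqrt_delta_pos x t Hx).
  unfold w, dw, delta; auto_derive; fold_delta.
  - repeat split; lra.
  - change (1 - x * sin t ^ 2) with (delta x t).
    rewrite sqrt_sqrt by lra; field; lra.
Qed.

Lemma dw_continuous x t : x < 1 -> continuous (dw x) t.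
Proof.
  intros Hx; pose proof (delta_pos x t Hx); pose proof (sqrt_delta_pos x t Hx).
  apply continuous_of_ex_derive; unfold dw, delta; auto_derive; fold_delta.
  repeat split; try lra; nra.
Qed.

Lemma continuity_2d_pt_delta x t : continuity_2d_pt delta x t.
Proof.
  apply continuity_2d_pt_minus; [apply continuity_2d_pt_const |].
  apply continuity_2d_pt_mult; [apply continuity_2d_pt_id1 |].
  apply (continuity_1d_2d_pt_comp (fun s => sin s ^ 2) (fun _ v => v));
    [| apply continuity_2d_pt_id2].
  apply continuity_pt_filterlim, continuous_of_ex_derive; auto_derive; auto.
Qed.

Lemma continuity_2d_pt_weighted_dw (q : R -> R) x t :
  (forall t, continuous q t) -> x < 1 ->
  continuity_2d_pt (fun u v => q v * dw u v) x t.
Proof.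
  intros Hq Hx; pose proof (delta_pos x t Hx); pose proof (sqrt_delta_pos x t Hx).
  pose proof (continuity_2d_pt_delta x t) as Hdelta.
  assert (Hcomp : forall f : R -> R, continuous f t -> continuity_2d_pt (fun _ v => f v) x t).
  { intros f Hf; apply (continuity_1d_2d_pt_comp f (fun _ v => v));
      [now apply continuity_pt_filterlim | apply continuity_2d_pt_id2]. }
  apply continuity_2d_pt_mult; [apply Hcomp, Hq |]; unfold dw.
  apply continuity_2d_pt_mult.
  - apply Hcomp, continuous_of_ex_derive; auto_derive; auto.
  - apply continuity_2d_pt_inv; [| nra].
    apply continuity_2d_pt_mult; [apply continuity_2d_pt_const |].
    apply continuity_2d_pt_mult; [exact Hdelta |].
    apply (continuity_1d_2d_pt_comp sqrt delta); [apply continuity_pt_sqrt; lra | exact Hdelta].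
Qed.

Lemma is_derive_weighted_RInt (q : R -> R) x :
  (forall t, continuous q t) -> x < 1 ->
  is_derive (fun y => RInt (fun t => q t * w y t) 0 (PI / 2)) x
            (RInt (fun t => q t * dw x t) 0 (PI / 2)).
Proof.
  intros Hq Hx.
  assert (Hderiv : forall y t, y < 1 -> is_derive (fun u => q t * w u t) y (q t * dw y t)).
  { intros y t Hy; apply (is_derive_scal (fun u => w u t)), is_derive_w, Hy. }
  assert (Hnear : locally x (fun y => y < 1)) by now apply (open_lt 1).
  rewrite (RInt_ext _ (fun t => Derive (fun u => q t * w u t) x))
    by (intros t _; symmetry; now apply is_derive_unique, Hderiv).
  apply (is_derive_RInt_param (fun u t => q t * w u t)).
  - apply (filter_imp _ _ (fun y Hy t _ => ex_intro _ _ (Hderiv y t Hy)) Hnear).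
  - intros t _; apply continuity_2d_pt_ext_loc with (f := fun u v => q v * dw u v).
    + exists (mkposreal (1 - x) ltac:(lra)); intros u v Hu _; simpl in Hu.
      apply Rabs_def2 in Hu; symmetry; apply is_derive_unique, Hderiv; lra.
    + now apply continuity_2d_pt_weighted_dw.
  - apply (filter_imp (fun y => y < 1)); [intros y Hy | exact Hnear].
    now apply ex_RInt_weighted.
Qed.

Definition Kint (x : R) : R := RInt (w x) 0 (PI / 2).
Definition Aint (x : R) : R := RInt (fun t => cos t ^ 2 * w x t) 0 (PI / 2).

Lemma is_derive_sin_cos_w x t : x < 1 ->
  is_derive (fun s => sin s * cos s * w x s) t (cos t ^ 2 * w x t - 2 * (1 - x) * dw x t).
Proof.
  intros Hx; pose proof (delta_pos x t Hx); pose proof (sqrt_delta_pos x t Hx).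
  pose proof (sin2_cos2 t) as Hsc; unfold Rsqr in Hsc.
  unfold w, dw, delta; auto_derive; fold_delta.
  - repeat split; lra.
  - change (1 - x * sin t ^ 2) with (delta x t).
    assert (Hd : sqrt (delta x t) * sqrt (delta x t) = delta x t) by (apply sqrt_sqrt; lra).
    set (S := sqrt (delta x t)) in *; rewrite <- Hd; unfold delta in Hd.
    field_simplify; [| lra | lra].
    replace (cos t ^ 2) with (1 - sin t ^ 2) by nra.
    replace (S ^ 3) with (S * (1 - x * sin t ^ 2)) by (rewrite <- Hd; ring).
    replace (S ^ 2) with (1 - x * sin t ^ 2) by (rewrite <- Hd; ring).
    field; unfold delta in H; lra.
Qed.

(* Integration by parts of [sin t cos t · w x t], which vanishes at [0] and [π/2]. *)
Lemma Aint_eq_RInt_dw x : x < 1 -> Aint x = 2 * (1 - x) * RInt (dw x) 0 (PI / 2).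
Proof.
  intros Hx.
  assert (Hcont : forall t, continuous (fun s => cos s ^ 2 * w x s) t)
    by (intros; apply weighted_continuous; [apply cos2_continuous | exact Hx]).
  assert (Hbound := is_RInt_derive (V := R_CompleteNormedModule) _ _ 0 (PI / 2)
    (fun t _ => is_derive_sin_cos_w x t Hx)
    (fun t _ => continuous_minus _ (fun s => 2 * (1 - x) * dw x s) t (Hcont t)
                  (continuous_scal_r (2 * (1 - x)) (dw x) t (dw_continuous x t Hx)))).
  apply is_RInt_unique in Hbound; rewrite cos_PI2, sin_0 in Hbound.
  rewrite (RInt_ext _ (fun s => 1 * (cos s ^ 2 * w x s) + - (2 * (1 - x)) * dw x s)) in Hbound
    by (intros; simpl; ring).
  rewrite RInt_lin in Hbound;
    [| now apply ex_RInt_of_continuous | apply ex_RInt_of_continuous; intros; now apply dw_continuous].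
  change (minus ?a ?b) with (a - b) in Hbound; unfold Aint; lra.
Qed.

Lemma is_derive_Kint x : x < 1 -> is_derive Kint x (Aint x / (2 * (1 - x))).
Proof.
  intros Hx.
  replace (Aint x / (2 * (1 - x))) with (RInt (fun t => 1 * dw x t) 0 (PI / 2)).
  - apply (is_derive_ext (fun y => RInt (fun t => 1 * w y t) 0 (PI / 2))).
    + intros y; apply RInt_ext; intros; apply Rmult_1_l.
    + apply is_derive_weighted_RInt; [intros; apply continuous_const | exact Hx].
  - rewrite Aint_eq_RInt_dw by exact Hx.
    rewrite (RInt_ext _ (dw x)) by (intros; apply Rmult_1_l).
    symmetry; apply Rmult_div_r; lra.
Qed.

Lemma w_ratio_eq x y t : x < 1 -> y < 1 -> w y t / w x t = sqrt (delta x t / delta y t).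
Proof.
  intros Hx Hy; pose proof (delta_pos x t Hx); pose proof (delta_pos y t Hy).
  pose proof (sqrt_delta_pos x t Hx); pose proof (sqrt_delta_pos y t Hy).
  rewrite sqrt_div by lra; unfold w; field; lra.
Qed.

Lemma w_ratio_continuous x y t : x < 1 -> y < 1 -> continuous (fun t => w y t / w x t) t.
Proof.
  intros Hx Hy; apply (continuous_ext (fun t => sqrt (delta x t / delta y t)));
    [intros; symmetry; now apply w_ratio_eq |].
  pose proof (delta_pos x t Hx); pose proof (delta_pos y t Hy).
  apply continuous_of_ex_derive; unfold delta; auto_derive; fold_delta.
  repeat split; try lra; apply Rdiv_lt_0_compat; lra.
Qed.

Lemma w_ratio_strict_increasing x y s t : x < y -> y < 1 -> 0 <= s -> s < t -> t <= PI / 2 ->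
  w y s / w x s < w y t / w x t.
Proof.
  intros Hxy Hy Hs Hst Ht; rewrite !w_ratio_eq by lra.
  pose proof (sin2_strict_increasing s t Hs Hst Ht).
  pose proof (delta_pos x s ltac:(lra)); pose proof (delta_pos y s Hy).
  pose proof (delta_pos x t ltac:(lra)); pose proof (delta_pos y t Hy).
  apply sqrt_lt_1_alt; split; [apply Rlt_le, Rdiv_lt_0_compat; lra |].
  apply (Rmult_lt_reg_r (delta y s * delta y t)); [nra |].
  replace (delta x s / delta y s * (delta y s * delta y t)) with (delta x s * delta y t) by (field; lra).
  replace (delta x t / delta y t * (delta y s * delta y t)) with (delta x t * delta y s) by (field; lra).
  unfold delta; nra.
Qed.

Lemma Aint_Kint_cross x y : x < y -> y < 1 -> Aint y * Kint x < Aint x * Kint y.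
Proof.
  intros Hxy Hy; pose proof PI_RGT_0.
  assert (Hwxy : forall t, w y t / w x t * w x t = w y t)
    by (intros t; pose proof (w_pos x t ltac:(lra)); field; lra).
  pose proof (RInt_chebyshev_strict (fun t => cos t ^ 2) (fun t => w y t / w x t) (w x) 0 (PI / 2))
    as Hcheb.
  rewrite (RInt_ext (fun t => cos t ^ 2 * (w y t / w x t) * w x t) (fun t => cos t ^ 2 * w y t)),
          (RInt_ext (fun t => w y t / w x t * w x t) (w y)) in Hcheb
    by (intros t _; simpl; rewrite ?Rmult_assoc, Hwxy; reflexivity).
  apply Hcheb; clear Hcheb; try lra.
  - apply cos2_continuous.
  - intros; apply w_ratio_continuous; lra.
  - intros; apply w_continuous; lra.
  - intros; apply w_pos; lra.
  - intros; now apply cos2_strict_decreasing.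
  - intros; now apply w_ratio_strict_increasing.
Qed.

Lemma Kint_0 : Kint 0 = PI / 2.
Proof.
  unfold Kint; rewrite (RInt_ext _ (fun _ => 1)) by (intros; apply w_0).
  rewrite RInt_const_R; real_eq; ring.
Qed.

Lemma Aint_0 : Aint 0 = PI / 4.
Proof.
  unfold Aint; rewrite (RInt_ext _ (fun t => cos t ^ 2)) by (intros; simpl; rewrite w_0; ring).
  apply is_RInt_unique.
  replace (PI / 4) with (minus ((PI / 2 + sin (PI / 2) * cos (PI / 2)) / 2) ((0 + sin 0 * cos 0) / 2))
    by (rewrite cos_PI2, sin_0; unfold minus, plus, opp; simpl; field).
  apply (is_RInt_derive (V := R_CompleteNormedModule) (fun t => (t + sin t * cos t) / 2)).
  - intros t _; pose proof (sin2_cos2 t) as Hsc; unfold Rsqr in Hsc; auto_derive; [auto | nra].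
  - intros; apply continuous_of_ex_derive; auto_derive; auto.
Qed.

Lemma Kint_ge_PI2 x : 0 <= x < 1 -> PI / 2 <= Kint x.
Proof.
  intros Hx; pose proof PI_RGT_0.
  replace (PI / 2) with (RInt (fun _ => 1) 0 (PI / 2)) by (rewrite RInt_const_R; real_eq; ring).
  apply RInt_le; [lra | apply ex_RInt_const | apply ex_RInt_w; lra |].
  intros; now apply w_ge_1.
Qed.

Lemma Kint_pos x : 0 <= x < 1 -> 0 < Kint x.
Proof. intros Hx; pose proof (Kint_ge_PI2 x Hx); pose proof PI_RGT_0; lra. Qed.

Lemma Aint_le_1 x : x < 1 -> Aint x <= 1.
Proof.
  intros Hx; pose proof PI_RGT_0.
  replace 1 with (RInt cos 0 (PI / 2)).
  2: { apply is_RInt_unique; replace 1 with (minus (sin (PI / 2)) (sin 0))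
         by (rewrite sin_PI2, sin_0; unfold minus, plus, opp; simpl; ring).
       apply (is_RInt_derive (V := R_CompleteNormedModule));
         intros; [auto_derive; [auto | ring] | apply continuous_of_ex_derive; auto_derive; auto]. }
  apply RInt_le; [lra | apply ex_RInt_weighted; [apply cos2_continuous | lra] | |].
  { apply ex_RInt_of_continuous; intros; apply continuous_of_ex_derive; auto_derive; auto. }
  intros t Ht; pose proof (sqrt_delta_pos x t Hx); pose proof (sin2_bounds t).
  pose proof (sin2_cos2 t) as Hsc; unfold Rsqr in Hsc.
  assert (0 <= cos t) by (apply cos_ge_0; lra).
  assert (cos t <= sqrt (delta x t))
    by (rewrite <- (sqrt_pow2 (cos t)) by lra; apply sqrt_le_1_alt; unfold delta; nra).
  unfold w; apply (Rmult_le_reg_r (sqrt (delta x t))); [lra |].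
  replace (cos t ^ 2 * / sqrt (delta x t) * sqrt (delta x t)) with (cos t ^ 2) by (field; lra); nra.
Qed.

(* Compare [w x t] with [1 / (π/2 - t + sqrt (1 - x))], using [cos t <= π/2 - t]. *)
Lemma Kint_ge_log x : 0 <= x < 1 ->
  ln (PI / 2 + sqrt (1 - x)) - ln (sqrt (1 - x)) <= Kint x.
Proof.
  intros Hx; pose proof PI_RGT_0; set (d := sqrt (1 - x)).
  assert (Hd : 0 < d) by (apply sqrt_lt_R0; lra).
  assert (Hd2 : d * d = 1 - x) by (apply sqrt_sqrt; lra).
  assert (Hlog : is_RInt (fun t => / (PI / 2 - t + d)) 0 (PI / 2) (ln (PI / 2 + d) - ln d)).
  { replace (ln (PI / 2 + d) - ln d)
      with (minus (- ln (PI / 2 - PI / 2 + d)) (- ln (PI / 2 - 0 + d)))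
      by (unfold minus, plus, opp; simpl; rewrite Rminus_diag, Rminus_0_r, Rplus_0_l; ring).
    apply (is_RInt_derive (V := R_CompleteNormedModule) (fun t => - ln (PI / 2 - t + d)));
      intros t Ht; rewrite Rmin_left, Rmax_right in Ht by lra.
    - auto_derive; [lra | field; lra].
    - apply continuous_of_ex_derive; auto_derive; lra. }
  rewrite <- (is_RInt_unique _ _ _ _ Hlog).
  apply RInt_le; [lra | eexists; exact Hlog | apply ex_RInt_w; lra |].
  intros t Ht; pose proof (sqrt_delta_pos x t (proj2 Hx)); pose proof (sin2_bounds t).
  pose proof (sin2_cos2 t) as Hsc; unfold Rsqr in Hsc.
  assert (Hcos : 0 <= cos t <= PI / 2 - t).
  { split; [apply cos_ge_0; lra |].
    rewrite <- sin_shift; apply Rlt_le, sin_lt_x; lra. }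
  assert (sqrt (delta x t) <= PI / 2 - t + d).
  { rewrite <- (sqrt_pow2 (PI / 2 - t + d)) by lra.
    apply sqrt_le_1_alt; unfold delta; nra. }
  unfold w; apply Rinv_le_contravar; lra.
Qed.

Lemma Kint_unbounded M : exists x, 0 < x < 1 /\ M < Kint x.
Proof.
  pose proof (Rabs_pos M); pose proof (Rle_abs M); set (d := exp (- (Rabs M + 1))).
  assert (Hd : 0 < d < 1).
  { split; [apply exp_pos |]; rewrite <- exp_0; unfold d; apply exp_increasing; lra. }
  exists (1 - d * d); split; [split; nra |].
  pose proof (Kint_ge_log (1 - d * d) ltac:(split; nra)) as HK.
  replace (1 - (1 - d * d)) with (d ^ 2) in HK by ring.
  rewrite sqrt_pow2 in HK by lra; unfold d at 2 in HK; rewrite ln_exp in HK.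
  assert (0 < ln (PI / 2 + d)) by (rewrite <- ln_1; apply ln_increasing; pose proof PI2_1; lra).
  lra.
Qed.

Definition AKratio (x : R) : R := Aint x / Kint x.

Lemma AKratio_0 : AKratio 0 = 1 / 2.
Proof. unfold AKratio; rewrite Aint_0, Kint_0; pose proof PI_RGT_0; field; lra. Qed.

Lemma AKratio_strict_decreasing x y : 0 <= x -> x < y -> y < 1 -> AKratio y < AKratio x.
Proof.
  intros Hx Hxy Hy; pose proof (Aint_Kint_cross x y Hxy Hy).
  pose proof (Kint_pos x ltac:(lra)); pose proof (Kint_pos y ltac:(lra)).
  unfold AKratio; apply (Rmult_lt_reg_r (Kint x * Kint y)); [nra |].
  replace (Aint y / Kint y * (Kint x * Kint y)) with (Aint y * Kint x) by (field; lra).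
  replace (Aint x / Kint x * (Kint x * Kint y)) with (Aint x * Kint y) by (field; lra); lra.
Qed.

Lemma AKratio_continuous x : 0 <= x < 1 -> continuity_pt AKratio x.
Proof.
  intros Hx; apply continuity_pt_filterlim, continuous_of_ex_derive; eexists.
  apply is_derive_div; [| apply is_derive_Kint; lra | pose proof (Kint_pos x Hx); lra].
  apply (is_derive_weighted_RInt (fun t => cos t ^ 2)); [apply cos2_continuous | lra].
Qed.

Lemma AKratio_small e : 0 < e -> exists x, 0 < x < 1 /\ AKratio x < e.
Proof.
  intros He; destruct (Kint_unbounded (/ e)) as [x [Hx HK]].
  exists x; split; [exact Hx |].
  pose proof (Aint_le_1 x ltac:(lra)); pose proof (Kint_pos x ltac:(lra)).
  assert (Hinv : 0 < / e) by now apply Rinv_0_lt_compat.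
  unfold AKratio; apply (Rmult_lt_reg_r (Kint x)); [lra |].
  replace (Aint x / Kint x * Kint x) with (Aint x) by (field; lra).
  apply (Rmult_lt_reg_l (/ e)); [exact Hinv |].
  rewrite <- Rmult_assoc, Rinv_l, Rmult_1_l by lra; nra.
Qed.

Lemma K_eq_Kint x : 0 <= x -> K x = Kint x.
Proof.
  intros Hx; unfold K, calK, Kint; apply RInt_ext; intros t _.
  unfold w, delta; now rewrite pow2_sqrt.
Qed.

Lemma E_eq_Kint_Aint x : 0 <= x < 1 -> E x = (1 - x) * Kint x + x * Aint x.
Proof.
  intros Hx; unfold Kint, Aint.
  rewrite <- RInt_lin; [| apply ex_RInt_w; lra | apply ex_RInt_weighted; [apply cos2_continuous | lra]].
  unfold E, calE; apply RInt_ext; intros t _; rewrite pow2_sqrt by lra.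
  change (1 - x * sin t ^ 2) with (delta x t).
  pose proof (sqrt_delta_pos x t (proj2 Hx)).
  assert (HS : sqrt (delta x t) * sqrt (delta x t) = 1 - x * sin t ^ 2)
    by (apply sqrt_sqrt, Rlt_le, delta_pos; lra).
  pose proof (sin2_cos2 t) as Hsc; unfold Rsqr in Hsc.
  unfold w; set (S := sqrt (delta x t)) in *.
  apply (Rmult_eq_reg_r S); [| lra].
  real_eq; rewrite HS; field_simplify; [nra | lra].
Qed.

Lemma zfun_eq p x : 0 <= x < 1 -> zfun p x = x * Kint x * (AKratio x - 2 * p).
Proof.
  intros Hx; pose proof (Kint_pos x Hx).
  unfold zfun, AKratio; rewrite E_eq_Kint_Aint, K_eq_Kint by lra; field; lra.
Qed.

Lemma zfun_eq0_iff p x : 0 < x < 1 -> zfun p x = 0 <-> AKratio x = 2 * p.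
Proof.
  intros Hx; pose proof (Kint_pos x ltac:(lra)); rewrite zfun_eq by lra; split.
  - intros H0; apply Rmult_integral in H0; destruct H0 as [H0 | H0]; [nra | lra].
  - intros ->; ring.
Qed.

Lemma Rpower_pos u p : 0 < Rpower u p.
Proof. apply exp_pos. Qed.

Lemma Rpower_decreasing_exponent u p q : 0 < u < 1 -> p < q -> Rpower u q < Rpower u p.
Proof.
  intros Hu Hpq; unfold Rpower; apply exp_increasing.
  assert (ln u < 0) by (rewrite <- ln_1; apply ln_increasing; lra); nra.
Qed.

Definition gK (p r : R) : R := Rpower (1 - r) p * Kint r.

Lemma gK_0 p : gK p 0 = PI / 2.
Proof. unfold gK, Rpower; rewrite Rminus_0_r, ln_1, Rmult_0_r, exp_0, Kint_0; ring. Qed.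

Lemma K_eq_gK_div p r : 0 <= r < 1 -> K r = gK p r / Rpower (1 - r) p.
Proof.
  intros Hr; pose proof (Rpower_pos (1 - r) p).
  unfold gK; rewrite K_eq_Kint by lra; field; lra.
Qed.

Lemma is_derive_gK p r : r < 1 ->
  is_derive (gK p) r (Rpower (1 - r) p / (2 * (1 - r)) * (Aint r - 2 * p * Kint r)).
Proof.
  intros Hr.
  assert (Hpow : is_derive (fun r => Rpower (1 - r) p) r (- p / (1 - r) * Rpower (1 - r) p)).
  { unfold Rpower; auto_derive; replace (1 + - r) with (1 - r) by ring; [lra | field; lra]. }
  replace (Rpower (1 - r) p / (2 * (1 - r)) * (Aint r - 2 * p * Kint r))
    with (- p / (1 - r) * Rpower (1 - r) p * Kint r + Rpower (1 - r) p * (Aint r / (2 * (1 - r))))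
    by (field; lra).
  apply (is_derive_mult (fun r => Rpower (1 - r) p) Kint); [exact Hpow | now apply is_derive_Kint |].
  intros; apply Rmult_comm.
Qed.

Lemma gK_mean_value p a b : 0 <= a -> a < b -> b < 1 ->
  exists c s, a < c < b /\ 0 < s /\ gK p b - gK p a = s * (AKratio c - 2 * p).
Proof.
  intros Ha Hab Hb.
  destruct (MVT_cor2 (gK p) (fun r => Rpower (1 - r) p / (2 * (1 - r)) * (Aint r - 2 * p * Kint r))
              a b Hab) as [c [Hmvt Hc]].
  { intros c Hc; apply is_derive_Reals, is_derive_gK; lra. }
  pose proof (Kint_pos c ltac:(lra)); pose proof (Rpower_pos (1 - c) p).
  exists c, (Rpower (1 - c) p / (2 * (1 - c)) * Kint c * (b - a)); split; [exact Hc | split].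
  - apply Rmult_lt_0_compat; [apply Rmult_lt_0_compat; [apply Rdiv_lt_0_compat |] |]; lra.
  - rewrite Hmvt; unfold AKratio; field; lra.
Qed.

Lemma gK_strict_increasing p a b : 0 <= a -> a < b -> b < 1 ->
  (forall c, a < c < b -> 2 * p < AKratio c) -> gK p a < gK p b.
Proof.
  intros Ha Hab Hb Hsign; destruct (gK_mean_value p a b Ha Hab Hb) as [c [s [Hc [Hs Heq]]]].
  pose proof (Hsign c Hc); nra.
Qed.

Lemma gK_strict_decreasing p a b : 0 <= a -> a < b -> b < 1 ->
  (forall c, a < c < b -> AKratio c < 2 * p) -> gK p b < gK p a.
Proof.
  intros Ha Hab Hb Hsign; destruct (gK_mean_value p a b Ha Hab Hb) as [c [s [Hc [Hs Heq]]]].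
  pose proof (Hsign c Hc); nra.
Qed.

Lemma K_bounds_ge_quarter p r : 1 / 4 <= p -> 0 < r < 1 ->
  PI / 2 * Rpower (1 - r) p < K r /\ K r < PI / (2 * Rpower (1 - r) p).
Proof.
  intros Hp Hr; pose proof PI_RGT_0; pose proof AKratio_0.
  pose proof (Rpower_pos (1 - r) p) as Hpos; pose proof (Kint_ge_PI2 r ltac:(lra)).
  assert (Hlt1 : Rpower (1 - r) p < 1).
  { pose proof (Rpower_decreasing_exponent (1 - r) 0 p ltac:(lra) ltac:(lra)) as Hexp0.
    now rewrite Rpower_O in Hexp0 by lra. }
  assert (Hexp : Rpower (1 - r) p <= Rpower (1 - r) (1 / 4)).
  { destruct (Req_dec p (1 / 4)) as [-> | Hne]; [lra |].
    apply Rlt_le, Rpower_decreasing_exponent; lra. }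
  assert (Hquarter : gK (1 / 4) r < PI / 2).
  { rewrite <- (gK_0 (1 / 4)); apply gK_strict_decreasing; [lra | lra | lra |].
    intros c Hc; pose proof (AKratio_strict_decreasing 0 c ltac:(lra) ltac:(lra) ltac:(lra)); lra. }
  assert (Hp_quarter : gK p r <= gK (1 / 4) r) by (unfold gK; nra).
  split.
  - rewrite K_eq_Kint by lra; nra.
  - rewrite (K_eq_gK_div p r) by lra.
    replace (PI / (2 * Rpower (1 - r) p)) with (PI / 2 / Rpower (1 - r) p) by (field; lra).
    apply Rmult_lt_compat_r; [now apply Rinv_0_lt_compat | lra].
Qed.

Lemma zfun_unique_zero p : 0 < p < 1 / 4 -> exists! xp, (0 < xp < 1) /\ zfun p xp = 0.
Proof.
  intros Hp; pose proof AKratio_0.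
  destruct (AKratio_small (2 * p) ltac:(lra)) as [y [Hy Hsmall]].
  destruct (Ranalysis5.IVT_interv (fun z => 2 * p - AKratio z) 0 y) as [x [Hx Hroot]];
    [| lra | lra | lra |].
  { intros z Hz; apply continuity_pt_minus; [apply continuity_pt_const; now intros ? ? |].
    apply AKratio_continuous; lra. }
  assert (Hx0 : x <> 0) by (intros ->; lra).
  exists x; split; [split; [lra | apply zfun_eq0_iff; lra] |].
  intros x' [Hx' Hz']; apply zfun_eq0_iff in Hz'; [| exact Hx'].
  destruct (Rtotal_order x x') as [Hlt | [Heq | Hgt]]; [| exact Heq |].
  - pose proof (AKratio_strict_decreasing x x' ltac:(lra) Hlt ltac:(lra)); lra.
  - pose proof (AKratio_strict_decreasing x' x ltac:(lra) Hgt ltac:(lra)); lra.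
Qed.

Lemma K_bounds_below_zero p xp r : 0 < xp < 1 -> zfun p xp = 0 -> 0 < r < xp ->
  PI / (2 * Rpower (1 - r) p) < K r /\ K r < Rpower (1 - xp) p * K xp / Rpower (1 - r) p.
Proof.
  intros Hxp Hz Hr; apply zfun_eq0_iff in Hz; [| exact Hxp].
  assert (Hincr : forall a b, 0 <= a -> a < b -> b <= xp -> gK p a < gK p b).
  { intros a b Ha Hab Hb; apply gK_strict_increasing; [lra | lra | lra |].
    intros c Hc; rewrite <- Hz; apply AKratio_strict_decreasing; lra. }
  pose proof (Hincr 0 r ltac:(lra) ltac:(lra) ltac:(lra)) as Hlow; rewrite gK_0 in Hlow.
  pose proof (Hincr r xp ltac:(lra) ltac:(lra) ltac:(lra)) as Hup.
  pose proof (Rpower_pos (1 - r) p) as Hpos.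
  rewrite (K_eq_gK_div p r), (K_eq_Kint xp) by lra; fold (gK p xp); split.
  - replace (PI / (2 * Rpower (1 - r) p)) with (PI / 2 / Rpower (1 - r) p) by (field; lra).
    apply Rmult_lt_compat_r; [now apply Rinv_0_lt_compat | exact Hlow].
  - apply Rmult_lt_compat_r; [now apply Rinv_0_lt_compat | exact Hup].
Qed.

Theorem mainTheorem16 :
  (forall p : R, 1 / 4 <= p ->
     forall r : R, 0 < r < 1 ->
       PI / 2 * Rpower (1 - r) p < K r /\ K r < PI / (2 * Rpower (1 - r) p))
  /\
  (forall p : R, 0 < p < 1 / 4 ->
     (exists! xp : R, (0 < xp < 1) /\ zfun p xp = 0) /\
     (forall xp : R, 0 < xp < 1 -> zfun p xp = 0 ->
        forall r : R, 0 < r < xp ->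
          PI / (2 * Rpower (1 - r) p) < K r /\
          K r < Rpower (1 - xp) p * K xp / Rpower (1 - r) p)).
Proof.
  split.
  - intros p Hp r; now apply K_bounds_ge_quarter.
  - intros p Hp; split.
    + now apply zfun_unique_zero.
    + intros xp Hxp Hz r; now apply K_bounds_below_zero.
Qed.
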